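(* Let $n\in\mathbb N$, $\varepsilon\in[0,\frac18]$ and let $C\subset A_n$ be a von Neumann subalgebra such that $\frac1n\sum_{i=1}^n\|X_{n,i}-\mathrm E_C(X_{n,i})\|_2^2\leq\varepsilon$. Then $\dim(Cz)\geq 2^{\,n-\mathrm H(4\varepsilon)n-3}$ for any projection $z\in C$ with $\tau(z)\geq\frac12$.
   Context: $A_n=\bigotimes_{k=1}^n\mathbb C^2\cong\mathbb C^{2^n}$ (equivalently $L^\infty(\{0,1\}^n)$) with its normalized trace $\tau$ (uniform measure) and $\|x\|_2=\tau(x^*x)^{1/2}$. $X_{n,i}=1\otimes\cdots\otimes\sigma\otimes\cdots\otimes1$ with $\sigma=(1,-1)\in\mathbb C^2$ in the $i$-th position. Von Neumann subalgebras are unital $*$-subalgebras; $\mathrm E_C$ is the trace-preserving conditional expectation onto $C$. $\mathrm H(\delta)=-\delta\log_2\delta-(1-\delta)\log_2(1-\delta)$ is the binary entropy function (with the convention $\mathrm H(0)=0$). *)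

From HB Require Import structures.
From mathcomp Require Import all_boot all_order all_algebra.
From mathcomp Require Import complex.
From mathcomp Require Import reals exp.
Set Implicit Arguments. Unset Strict Implicit. Unset Printing Implicit Defensive.
Import Order.TTheory GRing.Theory Num.Theory.
Local Open Scope ring_scope.
Local Open Scope complex_scope.

(* The hypercube {0,1}^n, encoded as boolean functions on 'I_n
   (false = 0, true = 1). *)
Notation cube n := {ffun 'I_n -> bool}.

(* A_n = L^oo({0,1}^n) = C^{2^n}: complex-valued functions on the cube,
   a finite-dimensional vector space over C = R[i]. *)
Notation An R n := {ffun cube n -> (R[i])^o}.

Section Defs.
Variables (R : realType) (n : nat).

Definition amul (x y : An R n) : An R n := [ffun w => x w * y w].
Definition aone : An R n := [ffun => 1].
Definition aadj (x : An R n) : An R n := [ffun w => (x w)^*].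

Definition tau (x : An R n) : R[i] := (2 ^+ n)^-1 * \sum_(w : cube n) x w.

Definition norm2sq (x : An R n) : R[i] := tau (amul (aadj x) x).

(* X_{n,i} = 1 (x) ... (x) sigma (x) ... (x) 1, sigma = (1,-1) *)
Definition Xn (i : 'I_n) : An R n := [ffun w : cube n => if w i then -1 else 1].

(* von Neumann subalgebra: unital *-subalgebra (finite dimension, so
   automatically weakly closed) *)
Definition is_vN_subalg (C : {vspace An R n}) : Prop :=
  [/\ aone \in C,
      forall x y, x \in C -> y \in C -> amul x y \in C &
      forall x, x \in C -> aadj x \in C].

Definition apos (x : An R n) : Prop := forall w, 0 <= x w.

Definition is_trace_cond_exp (C : {vspace An R n}) (E : An R n -> An R n)
  : Prop :=
  [/\ forall x, E x \in C,
      forall c, c \in C -> E c = c,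
      forall (a : R[i]) x y, E (a *: x + y) = a *: E x + E y,
      forall c x, c \in C -> E (amul c x) = amul c (E x) /\ E (amul x c) = amul (E x) c &
      forall x, apos x -> apos (E x)]
  /\ (forall x, tau (E x) = tau x).

Definition is_proj (z : An R n) : Prop := aadj z = z /\ amul z z = z.

Definition vmulr (C : {vspace An R n}) (z : An R n) : {vspace An R n} :=
  (linfun (fun x => amul x z) @: C)%VS.

End Defs.

Definition log2 (R : realType) (x : R) : R := ln x / ln 2.
Definition Hbin (R : realType) (d : R) : R :=
  if (d == 0) || (d == 1) then 0
  else - d * log2 d - (1 - d) * log2 (1 - d).

(* A von Neumann subalgebra C of L^oo({0,1}^n) is the algebra of functions
   constant on the atoms of a partition of the cube, and E_C averages over
   atoms.  The hypothesis bounds the total squared deviation of the sign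
   vectors from their atom means by eps n 2^n, so by Markov's inequality at
   most 2^n / 4 points lie in atoms of mean deviation above 4 eps n; hence at
   least 2^n / 4 points of the support of z, which has at least 2^(n-1)
   points, lie in atoms of mean deviation at most 4 eps n.  In such an atom
   the points are at average Hamming distance at most 2 eps n from the
   majority word, so half of the atom lies in a Hamming ball of radius
   4 eps n, of size at most 2^(H(4 eps) n).  The support of z, a union of
   atoms, thus contains at least 2^(n - H(4 eps) n - 3) atoms, whose
   indicators are linearly independent elements of C z. *)

From HB Require Import structures.
From mathcomp Require Import all_boot all_order all_algebra.
From mathcomp Require Import complex.
From mathcomp Require Import reals exp.
From mathcomp Require Import ring lra.
Set Implicit Arguments. Unset Strict Implicit. Unset Printing Implicit Defensive.
Import Order.TTheory GRing.Theory Num.Theory.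
Local Open Scope ring_scope.
Local Open Scope complex_scope.

Definition mean (K : fieldType) (T : finType) (B : {set T}) (f : T -> K) : K :=
  (\sum_(v in B) f v) / #|B|%:R.

Section Counting.
Variables (R : realFieldType) (T : finType).

Lemma sum_indicator_card (B : {pred T}) (P : pred T) :
  \sum_(v in B) ((P v)%:R : R) = #|[set v in B | P v]|%:R.
Proof.
rewrite -sum1_card natr_sum [RHS]big_mkcond [LHS]big_mkcond /=.
by apply: eq_bigr => v _; rewrite !inE; case: (v \in B); case: (P v).
Qed.

Lemma markov_count (B : {pred T}) (f : T -> R) (t c : R) :
  0 <= t -> 0 <= c -> (forall v, v \in B -> 0 <= f v) ->
  \sum_(v in B) f v <= c * t -> #|[set v in B | t < f v]|%:R <= c.
Proof.
move=> t0 c0 f0 hs; have [t_eq0|tn0] := eqVneq t 0.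
  rewrite t_eq0 mulr0 in hs *.
  suff -> : [set v in B | 0 < f v] = set0 by rewrite cards0.
  have f_eq0 : forall v, v \in B -> f v = 0.
    by apply: (psumr_eq0P f0); apply/eqP; rewrite eq_le (sumr_ge0 _ f0) andbT.
  by apply/setP => v; rewrite !inE; apply/negbTE/andP => -[/f_eq0 ->]; rewrite ltxx.
have tpos : 0 < t by rewrite lt_def tn0.
rewrite -(ler_pM2r tpos) -sum_indicator_card mulr_suml (le_trans _ hs) //.
by apply: ler_sum => v /f0 fv0; case: ltP => [/ltW|]; rewrite ?mul0r ?mul1r.
Qed.

Definition sgn (b : bool) : R := if b then -1 else 1.

Definition majority (B : {set T}) (b : T -> bool) : bool :=
  (#|B| < 2 * #|[set v in B | b v]|)%N.

(* With k of the N bits true, the squared deviations of the signs from their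
   mean add up to 4 k (N - k) / N, at least twice the size of the minority. *)
Lemma sum_neq_majority_le (B : {set T}) (b : T -> bool) :
  \sum_(v in B) ((b v != majority B b)%:R : R) <=
  (\sum_(v in B) (sgn (b v) - mean B (sgn \o b)) ^+ 2) / 2.
Proof.
have [/eqP|B0] := posnP #|B|.
  by rewrite cards_eq0 => /eqP ->; rewrite !big_set0 mul0r.
set N : R := #|B|%:R; set k : R := #|[set v in B | b v]|%:R.
have Npos : 0 < N by rewrite ltr0n.
have kN : k <= N.
  by rewrite ler_nat; apply/subset_leq_card/subsetP => v; rewrite inE => /andP[].
have sum_sgn : \sum_(u in B) sgn (b u) = N - 2 * k.
  rewrite (eq_bigr (fun u => 1 - 2 * (b u)%:R)) => [|u _]; last first.
    by rewrite /sgn; case: (b u) => /=; ring.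
  by rewrite sumrB sumr_const -mulr_sumr sum_indicator_card.
have -> : \sum_(v in B) (sgn (b v) - mean B (sgn \o b)) ^+ 2 = 4 * k * (N - k) / N.
  have -> : mean B (sgn \o b) = (N - 2 * k) / N by rewrite /mean -sum_sgn.
  rewrite (eq_bigr (fun v => 1 + ((N - 2 * k) / N) ^+ 2 - 2 * ((N - 2 * k) / N) * sgn (b v)))
    => [|v _]; last by rewrite /sgn; case: (b v) => /=; ring.
  rewrite sumrB sumr_const -mulr_sumr sum_sgn -mulr_natr -/N.
  by field; rewrite gt_eqF.
rewrite /majority; case: ltnP => [maj|min].
  have maj' : N < 2 * k by rewrite /N /k -natrM ltr_nat.
  rewrite (eq_bigr (fun v => 1 - (b v)%:R)) => [|v _]; last first.
    by case: (b v); rewrite /= ?subrr ?subr0.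
  rewrite sumrB sumr_const sum_indicator_card -/N -/k.
  have -> : 4 * k * (N - k) / N / 2 = (N - k) + (N - k) * (2 * k - N) / N.
    by field; rewrite gt_eqF.
  by rewrite lerDl divr_ge0 ?mulr_ge0 ?subr_ge0 // ltW.
have min' : 2 * k <= N by rewrite /N /k -natrM ler_nat.
rewrite (eq_bigr (fun v => (b v)%:R)) => [|v _]; last by case: (b v).
rewrite sum_indicator_card -/k.
have -> : 4 * k * (N - k) / N / 2 = k + k * (N - 2 * k) / N.
  by field; rewrite gt_eqF.
by rewrite lerDl divr_ge0 ?mulr_ge0 ?subr_ge0 // ltW.
Qed.

End Counting.

Lemma Hbin_mul_ln2 (R : realType) (p : R) : 0 < p < 1 ->
  Hbin p * ln 2 = - (p * ln p + (1 - p) * ln (1 - p)).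
Proof.
case/andP=> p0 p1; have ln2 : ln (2 : R) != 0 by rewrite gt_eqF // ln_gt0 ?ltr1n.
by rewrite /Hbin gt_eqF // lt_eqF //= /log2; field.
Qed.

Section Hamming.
Variables (R : realType) (I : finType).
Local Notation word := {ffun I -> bool}.

Definition hamming (v c : word) : nat := #|[set i | v i != c i]|.

Lemma hammingE (v c : word) : (hamming v c)%:R = \sum_i ((v i != c i)%:R : R).
Proof.
rewrite /hamming -sum1_card natr_sum big_mkcond /=.
by apply: eq_bigr => i _; rewrite inE; case: (_ != _).
Qed.

Lemma hamming_le (v c : word) : (hamming v c <= #|I|)%N.
Proof. exact: max_card. Qed.

Definition majority_word (B : {set word}) : word :=
  [ffun i => majority B (fun v => v i)].

Lemma sum_hamming_majority_le (B : {set word}) :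
  \sum_(v in B) ((hamming v (majority_word B))%:R : R) <=
  (\sum_(v in B) \sum_i (sgn R (v i) - mean B (fun u => sgn R (u i))) ^+ 2) / 2.
Proof.
rewrite (eq_bigr _ (fun v _ => hammingE v _)) exchange_big [X in X / 2]exchange_big.
rewrite mulr_suml; apply: ler_sum => i _.
under eq_bigr do rewrite ffunE.
exact: (@sum_neq_majority_le R _ B (fun v => v i)).
Qed.

Definition flip_prob (p : R) (c v : word) : R :=
  \prod_i (if v i != c i then p else 1 - p).

Lemma sum_flip_prob p c : \sum_v flip_prob p c v = 1.
Proof.
rewrite /flip_prob -(bigA_distr_bigA (fun i b => if b != c i then p else 1 - p)).
by rewrite big1 // => i _; rewrite big_bool; case: (c i); rewrite /= ?subrK // addrC subrK.
Qed.

Lemma flip_probE p c v :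
  flip_prob p c v = p ^+ hamming v c * (1 - p) ^+ (#|I| - hamming v c).
Proof.
rewrite /flip_prob (bigID (fun i => v i != c i)) /=.
rewrite (eq_bigr (fun _ => p)) => [|i ->] //.
rewrite [X in _ * X](eq_bigr (fun _ => 1 - p)) => [|i /negbTE ->] //.
rewrite !prodr_const -(cardC [set i | v i != c i]) addKn /hamming.
by congr (_ ^+ _ * _ ^+ _); apply: eq_card => i; rewrite !inE.
Qed.

Lemma card_hamming_ball_le (c : word) (p : R) : 0 <= p <= 1 / 2 ->
  #|[set v | (hamming v c)%:R <= p * #|I|%:R]|%:R <= 2 `^ (Hbin p * #|I|%:R).
Proof.
case/andP=> p0 p12; set ball := [set v | _].
have [p_eq0|pn0] := eqVneq p 0.
  rewrite p_eq0 /Hbin eqxx mul0r powRr0.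
  apply: (@le_trans _ _ #|[set c]|%:R); last by rewrite cards1.
  rewrite ler_nat; apply/subset_leq_card/subsetP => v.
  rewrite !inE p_eq0 mul0r (ler_nat R _ 0) leqn0 cards_eq0 => /eqP v_eqc.
  apply/eqP/ffunP => i; apply/eqP/negP => /negP vic.
  by have := in_set0 i; rewrite -v_eqc inE vic.
have ppos : 0 < p by rewrite lt_def pn0.
have p01 : 0 < p < 1 by apply/andP; split; lra.
have qpos : 0 < 1 - p by rewrite subr_gt0; lra.
(* Flip probabilities sum to 1, and on the ball each is at least 2^(- H(p) |I|). *)
have weight_ball v : v \in ball -> 2 `^ (- (Hbin p * #|I|%:R)) <= flip_prob p c v.
  rewrite inE => hv; rewrite flip_probE /powR pnatr_eq0 /=.
  rewrite -[X in X ^+ hamming v c](lnK ppos) -[X in X ^+ (_ - _)](lnK qpos).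
  rewrite -!expRM_natl -expRD ler_expR.
  rewrite mulNr mulrAC (Hbin_mul_ln2 p01) natrB ?hamming_le //.
  have ln_le : ln p <= ln (1 - p) by rewrite ler_ln ?posrE //; lra.
  set h := (hamming v c)%:R in hv *; set N := #|I|%:R.
  have : (N * p - h) * (ln p - ln (1 - p)) <= 0.
    by rewrite mulr_ge0_le0 // ?subr_le0 // subr_ge0 mulrC.
  lra.
have w_ge0 v : 0 <= flip_prob p c v.
  by rewrite flip_probE mulr_ge0 // exprn_ge0 // ltW.
have : #|ball|%:R * 2 `^ (- (Hbin p * #|I|%:R)) <= 1.
  rewrite -[X in _ <= X](sum_flip_prob p c) mulr_natl -sumr_const.
  apply: le_trans (_ : \sum_(v in ball) flip_prob p c v <= _).
    exact: ler_sum.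
  by rewrite [X in _ <= X](bigID (mem ball)) /= lerDl sumr_ge0.
by rewrite powRN -ler_pdivlMr ?invr_gt0 ?powR_gt0 // div1r invrK.
Qed.

Lemma card_concentrated_le (B : {set word}) (c : word) (p : R) :
  0 <= p <= 1 / 2 ->
  \sum_(v in B) ((hamming v c)%:R : R) <= #|B|%:R / 2 * (p * #|I|%:R) ->
  #|B|%:R <= 2 * 2 `^ (Hbin p * #|I|%:R).
Proof.
move=> p01 hsum; have /andP[p0 _] := p01.
set far := [set v | p * #|I|%:R < (hamming v c)%:R].
have far_le : #|B :&: far|%:R <= #|B|%:R / 2 :> R.
  have -> : B :&: far = [set v in B | p * #|I|%:R < (hamming v c)%:R].
    by apply/setP => v; rewrite !inE.
  apply: markov_count hsum => [||v _]; [exact: mulr_ge0 | exact: divr_ge0 | exact: ler0n].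
have near_le : #|B :\: far|%:R <= 2 `^ (Hbin p * #|I|%:R).
  apply: le_trans (card_hamming_ball_le c p01); rewrite ler_nat.
  by apply/subset_leq_card/subsetP => v; rewrite !inE -leNgt => /andP[].
have /(congr1 (fun m => m%:R : R)) := cardsID far B; rewrite natrD => card_B.
lra.
Qed.

End Hamming.

Section Partition.
Variables (T : finType) (A : T -> {set T}).
Hypothesis mem_block : forall w, w \in A w.
Hypothesis block_eq : forall w v, v \in A w -> A v = A w.

Lemma block_sym w v : v \in A w -> w \in A v.
Proof. by move=> /block_eq ->. Qed.

Lemma card_block_gt0 w : (0 < #|A w|)%N.
Proof. by apply/card_gt0P; exists w. Qed.

Lemma sum_mean_block (K : numFieldType) (f : T -> K) :
  \sum_w mean (A w) f = \sum_w f w.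
Proof.
transitivity (\sum_w \sum_(v in A w) f v / #|A v|%:R).
  by apply: eq_bigr => w _; rewrite /mean mulr_suml; apply: eq_bigr => v /block_eq ->.
rewrite (exchange_big_dep predT) //=; apply: eq_bigr => v _.
rewrite (eq_bigl (mem (A v))) => [|w]; last by apply/idP/idP; apply: block_sym.
by rewrite sumr_const -[LHS]mulr_natr divfK // pnatr_eq0 -lt0n card_block_gt0.
Qed.

Lemma card_blocks (K : numFieldType) (Z : {set T}) :
  {in Z, forall w, A w \subset Z} ->
  #|A @: Z|%:R = \sum_(w in Z) (#|A w|%:R : K)^-1.
Proof.
move=> Z_closed; rewrite (partition_big A (mem (A @: Z))) => [|w]; last exact: imset_f.
rewrite -sum1_card natr_sum; apply: eq_bigr => _ /imsetP[r r_Z ->].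
rewrite (eq_bigl (mem (A r))) => [|w]; last first.
  apply/andP/idP => [[_ /eqP <-]|w_r]; first exact: mem_block.
  by split; [exact: subsetP (Z_closed r r_Z) w w_r | rewrite (block_eq w_r)].
rewrite (eq_bigr (fun _ => (#|A r|%:R)^-1)) => [|w /block_eq -> //].
by rewrite sumr_const -[RHS]mulr_natr mulVf // pnatr_eq0 -lt0n card_block_gt0.
Qed.

Lemma trivIset_blocks (Z : {set T}) : trivIset (A @: Z).
Proof.
apply/trivIsetP => _ _ /imsetP[w _ ->] /imsetP[v _ ->] Aw_neq_Av.
apply/pred0P => u /=; apply/negbTE/andP => -[u_w u_v].
by move/eqP: Aw_neq_Av; rewrite -(block_eq u_w) (block_eq u_v).
Qed.

Lemma set0_notin_blocks (Z : {set T}) : set0 \notin A @: Z.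
Proof. by apply/imsetP => -[w _ /setP/(_ w)]; rewrite inE mem_block. Qed.

End Partition.

Lemma regular_scaleE (K : pzSemiRingType) (a : K) (x : K^o) : a *: x = a * x.
Proof. by []. Qed.

Section Indicators.
Variables (K : fieldType) (T : finType).

Definition ind (B : {set T}) : {ffun T -> K^o} := [ffun v => (v \in B)%:R].

Lemma free_ind (P : {set {set T}}) :
  set0 \notin P -> trivIset P -> free [seq ind B | B <- enum P].
Proof.
move=> P0 /trivIsetP P_disj; set e := enum P.
have e_uniq : uniq e by apply: enum_uniq.
apply/(@freeP _ _ _ (in_tuple [seq ind B | B <- e])) => k sum_k0 i.
have lt_i : (i < size e)%N by rewrite -(size_map ind) ltn_ord.
have ei_P j : (j < size e)%N -> nth set0 e j \in P by move=> lt_j; rewrite -mem_enum mem_nth.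
have /set0Pn[x x_ei] : nth set0 e i != set0 by apply: contraNneq P0 => <-; apply: ei_P.
have /(congr1 (fun f : {ffun T -> K^o} => f x)) := sum_k0.
rewrite sum_ffunE ffunE (bigD1 i) //= big1 => [|j ji].
  by rewrite ffunE (nth_map set0) // ffunE x_ei addr0 regular_scaleE mulr1.
have lt_j : (j < size e)%N by rewrite -(size_map ind) ltn_ord.
rewrite ffunE (nth_map set0) // ffunE.
have e_neq : nth set0 e i != nth set0 e j by rewrite nth_uniq // eq_sym.
have e_disj := P_disj _ _ (ei_P _ lt_i) (ei_P _ lt_j) e_neq.
by rewrite (disjointFr e_disj x_ei) regular_scaleE mulr0.
Qed.

Lemma card_le_dimv (U : {vspace {ffun T -> K^o}}) (P : {set {set T}}) :
  set0 \notin P -> trivIset P -> {in P, forall B, ind B \in U} ->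
  (#|P| <= \dim U)%N.
Proof.
move=> P0 P_triv P_U; rewrite cardE -(size_map ind).
have /eqP <- := free_ind P0 P_triv.
apply/dimvS/span_subvP => _ /mapP[B B_P ->].
by apply: P_U; rewrite -mem_enum.
Qed.

End Indicators.

Arguments ind {K T} B.
Section BlockCount.
Variables (R : realType) (I : finType).
Local Notation word := {ffun I -> bool}.
Variable A : word -> {set word}.
Hypothesis mem_block : forall w, w \in A w.
Hypothesis block_eq : forall w v, v \in A w -> A v = A w.

Definition block_dev (w : word) : R :=
  \sum_i (sgn R (w i) - mean (A w) (fun v => sgn R (v i))) ^+ 2.

Lemma block_dev_ge0 w : 0 <= block_dev w.
Proof. by apply: sumr_ge0 => i _; apply: sqr_ge0. Qed.

Lemma card_block_le (p : R) w : 0 <= p <= 1 / 2 ->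
  mean (A w) block_dev <= p * #|I|%:R ->
  #|A w|%:R <= 2 * 2 `^ (Hbin p * #|I|%:R).
Proof.
move=> p01 dev_le; apply: (card_concentrated_le (c := majority_word (A w))) p01 _.
apply: (le_trans (sum_hamming_majority_le R (A w))).
have -> : \sum_(v in A w) \sum_i (sgn R (v i) - mean (A w) (fun u => sgn R (u i))) ^+ 2
          = \sum_(v in A w) block_dev v.
  by apply: eq_bigr => v /block_eq Av; rewrite /block_dev Av.
have Aw_pos : 0 < (#|A w|%:R : R) by rewrite ltr0n card_block_gt0.
rewrite /mean ler_pdivrMr // in dev_le.
by rewrite mulrAC ler_pM2r ?invr_gt0 // mulrC.
Qed.

Lemma sum_inv_card_block_ge (eps : R) (Z : {set word}) :
  0 <= eps <= 1 / 8 ->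
  2 ^+ #|I| <= 2 * #|Z|%:R :> R ->
  \sum_w block_dev w <= #|I|%:R * eps * 2 ^+ #|I| ->
  2 `^ (#|I|%:R - Hbin (4 * eps) * #|I|%:R - 3) <= \sum_(w in Z) (#|A w|%:R)^-1.
Proof.
move=> /andP[eps0 eps8] Z_big dev_le.
set r := 4 * eps * #|I|%:R; set Y := 2 `^ (Hbin (4 * eps) * #|I|%:R).
have Ypos : 0 < Y by rewrite powR_gt0.
set Bad := [set w | r < mean (A w) block_dev].
have Bad_le : #|Bad|%:R <= 2 ^+ #|I| / 4 :> R.
  apply: (markov_count (B := predT)) => [||w _|].
  - by rewrite /r !mulr_ge0 //; lra.
  - by rewrite divr_ge0 // exprn_ge0.
  - by apply: divr_ge0; [apply: sumr_ge0 => v _; apply: block_dev_ge0|].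
  - by rewrite (sum_mean_block mem_block block_eq) (le_trans dev_le) // /r; lra.
set Good := Z :\: Bad.
have Good_ge : 2 ^+ #|I| / 4 <= #|Good|%:R :> R.
  have /(congr1 (fun m => m%:R : R)) := cardsID Bad Z; rewrite natrD => card_Z.
  have : #|Z :&: Bad|%:R <= #|Bad|%:R :> R by rewrite ler_nat subset_leq_card ?subsetIr.
  lra.
have Good_small w : w \in Good -> #|A w|%:R <= 2 * Y.
  rewrite !inE -leNgt => /andP[dev_w _]; apply: card_block_le dev_w.
  by apply/andP; split; lra.
have : #|Good|%:R / (2 * Y) <= \sum_(w in Z) (#|A w|%:R)^-1.
  rewrite (big_setID Bad) /= -/Good.
  apply: (@le_trans _ _ (\sum_(w in Good) (#|A w|%:R : R)^-1)); last first.
    by rewrite lerDr; apply: sumr_ge0 => w _; rewrite invr_ge0.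
  rewrite mulr_natl -sumr_const; apply: ler_sum => w /Good_small.
  by rewrite lef_pV2 ?posrE ?ltr0n ?card_block_gt0 ?mulr_gt0.
apply: le_trans.
have powR2_ne0 : (2 : R) != 0 by rewrite pnatr_eq0.
rewrite !powRB ?powR2_ne0 ?implybT // !powR_mulrn // -/Y.
have -> : 2 ^+ #|I| / Y / 2 ^+ 3 = 2 ^+ #|I| / 4 / (2 * Y) :> R.
  by field; rewrite gt_eqF.
by rewrite ler_wpM2r // invr_ge0 ltW // mulr_gt0.
Qed.

End BlockCount.

Definition amulr (R : realType) (n : nat) (z x : An R n) : An R n := amul x z.

Lemma amulr_is_linear (R : realType) (n : nat) (z : An R n) : linear (amulr z).
Proof.
move=> a x y; apply/ffunP => u; rewrite !ffunE.
by rewrite mulrDl -scalerAl.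
Qed.

HB.instance Definition _ (R : realType) (n : nat) (z : An R n) :=
  GRing.isLinear.Build R[i] (An R n) (An R n) _ (amulr z) (amulr_is_linear z).

Section Atoms.
Variables (R : realType) (n : nat) (C : {vspace An R n}).
Local Notation word := (cube n).
Local Notation b j := (tnth (vbasis C) j).

(* The minimal projections of [C] are the indicators of its atoms. *)
Definition atom (w : word) : {set word} := [set v | [forall j, b j v == b j w]].

Lemma mem_atom w : w \in atom w.
Proof. by rewrite inE; apply/forallP. Qed.

Lemma atom_eq w v : v \in atom w -> atom v = atom w.
Proof.
rewrite inE => /forallP vw; apply/setP => u; rewrite !inE.
by apply: eq_forallb => j; rewrite (eqP (vw j)).
Qed.

Lemma atom_const c w v : c \in C -> v \in atom w -> c v = c w.
Proof.
move=> c_C; rewrite inE => /forallP vw.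
rewrite (coord_vbasis c_C) !sum_ffunE; apply: eq_bigr => j _.
by rewrite !ffunE -(tnth_nth 0) (eqP (vw j)).
Qed.

Lemma big_amulE (J : Type) (r : seq J) (P : pred J) (F : J -> An R n) u :
  (\big[@amul R n/aone R n]_(j <- r | P j) F j) u = \prod_(j <- r | P j) F j u.
Proof.
by rewrite (big_morph (fun x : An R n => x u) (id1 := 1) (op1 := *%R)) // => [x y|];
  rewrite ffunE.
Qed.

Lemma sum_amul_ind (B : {set word}) (y : An R n) :
  \sum_u amul (ind B) y u = \sum_(u in B) y u.
Proof.
rewrite [RHS]big_mkcond; apply: eq_bigr => u _; rewrite !ffunE.
by case: (u \in B); rewrite ?mul1r ?mul0r.
Qed.

Hypothesis C_vN : is_vN_subalg C.

Definition atom_sep (w v : word) : An R n :=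
  if [pick j | b j v != b j w] is Some j
  then (b j w - b j v)^-1 *: (b j - b j v *: aone R n) else aone R n.

Lemma atom_sep_in w v : atom_sep w v \in C.
Proof.
have [one_C _ _] := C_vN; rewrite /atom_sep; case: pickP => [j _|_] //.
by rewrite memvZ // memvB ?memvZ // vbasis_mem ?mem_tnth.
Qed.

Lemma atom_sep_atom w v u : u \in atom w -> atom_sep w v u = 1.
Proof.
move=> u_w; rewrite /atom_sep; case: pickP => [j v_j|_]; last by rewrite ffunE.
rewrite !ffunE !regular_scaleE (atom_const (vbasis_mem (mem_tnth j _)) u_w) mulr1.
by rewrite mulVf // subr_eq0 eq_sym.
Qed.

Lemma atom_sep_self w v : v \notin atom w -> atom_sep w v v = 0.
Proof.
move=> v_w; rewrite /atom_sep; case: pickP => [j _|no_j].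
  by rewrite !ffunE !regular_scaleE mulr1 subrr mulr0.
by case/negP: v_w; rewrite inE; apply/forallP => j; apply/negbFE/no_j.
Qed.

Lemma ind_atom_in w : ind (atom w) \in C.
Proof.
have [one_C mul_C _] := C_vN.
have -> : ind (atom w) = \big[@amul R n/aone R n]_(v | v \notin atom w) atom_sep w v.
  apply/ffunP => u; rewrite big_amulE ffunE.
  have [u_w|u_nw] := boolP (u \in atom w).
    by rewrite big1 // => v _; apply: atom_sep_atom.
  rewrite (bigD1 u u_nw); apply/esym/eqP.
  by rewrite mulf_eq0 (introT eqP (atom_sep_self u_nw)).
by apply: (big_ind (fun x => x \in C)) => // v _; apply: atom_sep_in.
Qed.

(* tau (1_A E x) = tau (E (1_A x)) = tau (1_A x) for an atom A, on which E x is
   constant. *)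
Lemma condexp_atomE E x w : is_trace_cond_exp C E -> E x w = mean (atom w) x.
Proof.
case=> -[E_C _ _ E_mod _] E_tau.
have two_n_ne0 : ((2 : R[i]) ^+ n)^-1 != 0 by rewrite invr_eq0 expf_neq0 // pnatr_eq0.
have := E_tau (amul (ind (atom w)) x); rewrite (E_mod _ x (ind_atom_in w)).1 /tau.
move/(mulfI two_n_ne0); rewrite !sum_amul_ind /mean => <-.
rewrite (eq_bigr (fun _ => E x w)) => [|v]; last exact: atom_const.
rewrite sumr_const -[E x w *+ _]mulr_natr mulfK //.
by rewrite pnatr_eq0 -lt0n (card_block_gt0 mem_atom).
Qed.

Lemma Xn_sub_condexpE E i : is_trace_cond_exp C E ->
  Xn R i - E (Xn R i) =
  [ffun w : word => (sgn R (w i) - mean (atom w) (fun v => sgn R (v i)))%:C].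
Proof.
move=> hE; apply/ffunP => w; rewrite !ffunE condexp_atomE // rmorphB /mean.
rewrite rmorphM fmorphV rmorph_nat rmorph_sum; congr (_ - _ * _).
  by rewrite /sgn; case: (w i); rewrite ?rmorphN1 ?rmorph1.
by apply: eq_bigr => v _; rewrite ffunE /sgn; case: (v i); rewrite ?rmorphN1 ?rmorph1.
Qed.

Lemma norm2sq_realE (f : word -> R) :
  norm2sq [ffun w : word => (f w)%:C] = ((2 ^+ n)^-1 * \sum_w f w ^+ 2)%:C.
Proof.
rewrite /norm2sq /tau rmorphM fmorphV rmorphXn rmorph_nat rmorph_sum.
by congr (_ * _); apply: eq_bigr => w _; rewrite !ffunE conjc_real -rmorphM expr2.
Qed.

Lemma sum_block_dev_le E eps : is_trace_cond_exp C E ->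
  n%:R^-1 * \sum_(i < n) norm2sq (Xn R i - E (Xn R i)) <= eps%:C ->
  \sum_w block_dev R atom w <= n%:R * eps * 2 ^+ n.
Proof.
move=> hE; under eq_bigr do rewrite Xn_sub_condexpE // norm2sq_realE.
rewrite -rmorph_sum -(rmorph_nat (real_complex R)) -fmorphV -rmorphM lecR.
rewrite -mulr_sumr mulrA /block_dev exchange_big /=.
move=> S_le; have [n0|n_pos] := posnP n.
  rewrite [in X in _ <= X]n0 !mul0r big1 // => w _; rewrite big1 // => i _.
  by move: (leq_trans (ltn_ord i) (eq_leq n0)).
rewrite -mulrA !ler_pdivrMl ?ltr0n ?exprn_gt0 // in S_le.
by rewrite mulrC.
Qed.

End Atoms.

Lemma card_idem_supp_ge (R : realType) (n : nat) (z : An R n) :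
  amul z z = z -> 1 / 2 <= tau z -> 2 ^+ n <= 2 * #|[set w | z w == 1]|%:R :> R.
Proof.
move=> z_idem tau_z; set Z := [set w | _].
have z01 w : (z w == 0) || (z w == 1).
  have /ffunP/(_ w) := z_idem; rewrite ffunE => zw2.
  have : z w * (z w - 1) == 0 by rewrite mulrBr mulr1 zw2 subrr.
  by rewrite mulf_eq0 subr_eq0.
have sum_z : \sum_w z w = (#|Z|%:R : R)%:C.
  rewrite rmorph_nat -sum1_card natr_sum [RHS]big_mkcond; apply: eq_bigr => w _.
  by rewrite inE; case/orP: (z01 w) => /eqP ->; rewrite ?eqxx // eq_sym oner_eq0.
move: tau_z; rewrite /tau sum_z.
have -> : (1 / 2 : R[i]) = (1 / 2 : R)%:C by rewrite rmorphM rmorph1 fmorphV rmorph_nat.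
rewrite -(rmorph_nat (real_complex R)) -rmorphXn -fmorphV -rmorphM lecR.
rewrite ler_pdivlMl ?exprn_gt0 //; lra.
Qed.

Lemma ind_atom_in_vmulr (R : realType) (n : nat) (C : {vspace An R n}) z r :
  is_vN_subalg C -> z \in C -> z r = 1 -> ind (atom C r) \in vmulr C z.
Proof.
move=> C_vN z_C zr1.
have -> : ind (atom C r) = linfun (amulr z) (ind (atom C r)).
  rewrite lfunE; apply/ffunP => u; rewrite !ffunE.
  have [u_r|] := boolP (u \in atom C r); last by rewrite mul0r.
  by rewrite (atom_const z_C u_r) zr1 mulr1.
exact/memv_img/ind_atom_in.
Qed.

Theorem lemma6p6 (R : realType) (n : nat) (eps : R)
  (C : {vspace An R n}) (E : An R n -> An R n) :
  0 <= eps -> eps <= 1 / 8 ->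
  is_vN_subalg C ->
  is_trace_cond_exp C E ->
  n%:R^-1 * \sum_(i < n) norm2sq (Xn R i - E (Xn R i)) <= eps%:C ->
  forall z : An R n, z \in C -> is_proj z -> 1 / 2 <= tau z ->
  (2 : R) `^ (n%:R - Hbin (4 * eps) * n%:R - 3) <= (\dim (vmulr C z))%:R.
Proof.
move=> eps0 eps8 C_vN hE hX z z_C [_ z_idem] tau_z.
set Z := [set w | z w == 1].
have Z_closed : {in Z, forall w, atom C w \subset Z}.
  move=> w; rewrite inE => /eqP zw1; apply/subsetP => v v_w.
  by rewrite inE (atom_const z_C v_w) zw1.
have eps01 : 0 <= eps <= 1 / 8 by rewrite eps0.
have mem_atomC := @mem_atom R n C; have atom_eqC := @atom_eq R n C.
have := @sum_inv_card_block_ge R _ _ mem_atomC atom_eqC eps Z eps01.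
rewrite card_ord => /(_ (card_idem_supp_ge z_idem tau_z) (sum_block_dev_le C_vN hE hX)).
rewrite -(card_blocks mem_atomC atom_eqC R Z_closed) => /le_trans; apply.
rewrite ler_nat; apply: card_le_dimv => [||_ /imsetP[r r_Z ->]].
- exact: set0_notin_blocks mem_atomC Z.
- exact: trivIset_blocks atom_eqC Z.
- by apply: ind_atom_in_vmulr => //; move: r_Z; rewrite inE => /eqP.
Qed.
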